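(* Let $n\ge 2$ and assume the standing assumptions in the context hold. Let $(\nu,\mu)\in\mathbb{S}^2$ with $\nu\ne\mu$ be such that $\mathcal N_{\nu,\mu}$ is nonempty and $\operatorname{rank}(\Psi_{\nu,\mu})=n$. Then $$T_\mu^{-1}T_\nu=\hat{\mathcal O}_\mu^\dagger\,\mathcal Z_{\nu,\mu}\,\Psi_{\nu,\mu}^\dagger.$$ Here $\hat{\mathcal O}_\mu^\dagger=(\hat{\mathcal O}_\mu^T\hat{\mathcal O}_\mu)^{-1}\hat{\mathcal O}_\mu^T$ and $\Psi_{\nu,\mu}^\dagger=\Psi_{\nu,\mu}^T(\Psi_{\nu,\mu}\Psi_{\nu,\mu}^T)^{-1}$. In particular, $T_\mu^{-1}T_\nu$ is uniquely determined by the data $(u,\varphi,y)$ and the estimates $\hat{\mathcal P}$.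
   Context: **System data.** Consider the LSS $$x(k+1)=A_{\varphi(k)}x(k)+B_{\varphi(k)}u(k),\qquad y(k)=C_{\varphi(k)}x(k)+D_{\varphi(k)}u(k),$$ with $u(k)\in\mathbb{R}^m$, $y(k)\in\mathbb{R}^p$, $x(k)\in\mathbb{R}^n$. The switching sequence $\varphi:[1,N]\to\mathbb{S}=\{1,\dots,\sigma\}$ is surjective, and the discrete states are $\mathcal P_j=(A_j,B_j,C_j,D_j)$. **Switching times and dwell times.** Write $k_0=1<k_1<\dots<k_{i^*}<k_{i^*+1}=N$, where $\varphi$ is constant on each $[k_i,k_{i+1})$ and changes value at each $k_i$, $1\le i\le i^*$. Set $\delta_i=k_{i+1}-k_i$ and $\delta_*=\min_{0\le i\le i^*}\delta_i$. **Standing assumptions.** - Each $\mathcal P_j$ is minimal of McMillan degree $n$, has invertible $A_j$, and is BIBO stable. - $\delta_*\ge n$. - Local estimates $\hat{\mathcal P}_j=(\hat A_j,\hat B_j,\hat C_j,\hat D_j)$ are given, one per mode $j$. For some unknown nonsingular $T_j$ they satisfy $$\hat A_j=T_j^{-1}A_jT_j,\quad \hat B_j=T_j^{-1}B_j,\quad \hat C_j=C_jT_j,\quad \hat D_j=D_j.$$ **Constructions.** Let $q=\delta_*-1$. For a mode $j$, let $$\hat{\mathcal O}_j=[\hat C_j^T\ (\hat C_j\hat A_j)^T\cdots(\hat C_j\hat A_j^{q})^T]^T,$$ and let $\hat\Gamma_j$ be the block lower-triangular Toeplitz matrix with diagonal blocks $\hat D_j$ and $(r,s)$ block $\hat C_j\hat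 A_j^{r-s-1}\hat B_j$ for $r>s$ (block size $(q+1)\times(q+1)$). For $1\le i\le i^*$, write $\nu=\varphi(k_{i-1})$ and $\mu=\varphi(k_i)$. Define the following quantities. - The state estimate $$\hat x(k_{i-1})=\hat{\mathcal O}_\nu^\dagger\,(Y_{i-1}-\hat\Gamma_\nu U_{i-1}),$$ where $Y_{i-1}=[y(k_{i-1})^T\cdots y(k_{i-1}+q)^T]^T$ and $U_{i-1}$ is defined analogously from $u$. - The vector $$\kappa_{i-1}=\hat A_\nu^{k_i-k_{i-1}}\hat x(k_{i-1})+\sum_{l=k_{i-1}}^{k_i-1}\hat A_\nu^{k_i-l-1}\hat B_\nu u(l).$$ - For $k\in[k_i,k_{i+1})$, the corrected output $$\zeta_i(k)=y(k)-\hat D_\mu u(k)-\sum_{l=k_i}^{k-1}\hat C_\mu\hat A_\mu^{k-l-1}\hat B_\mu u(l),$$ where the sum is empty if $k=k_i$. - The stacked vector $Z_i=[\zeta_i(k_i)^T\cdots\zeta_i(k_i+q)^T]^T$. For $\nu\ne\mu$, let $\mathcal N_{\nu,\mu}=\{i\in[1,i^*]:\varphi(k_{i-1})=\nu,\ \varphi(k_i)=\mu\}$. Let $\Psi_{\nu,\mu}$ be the matrix whose columns are the vectors $\kappa_{i-1}$, and let $\mathcal Z_{\nu,\mu}$ be the matrix whose columns are the vectors $Z_i$, in both cases for $i\in\mathcal N_{\nu,\mu}$ taken in increasing order. *)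

From HB Require Import structures.
From mathcomp Require Import all_boot all_order all_algebra.
From mathcomp Require Import reals.
Set Implicit Arguments. Unset Strict Implicit. Unset Printing Implicit Defensive.
Import Order.TTheory GRing.Theory Num.Theory.
Local Open Scope ring_scope.

Section LTI.
Variable R : realType.

(* Kalman controllability / observability matrices and minimality
   (a realization of state dimension n that is minimal has McMillan degree n). *)
Definition controllable n m (A : 'M[R]_n) (B : 'M[R]_(n, m)) : bool :=
  \rank (\mxrow_(i < n) (A ^+ i *m B)) == n.
Definition observable n p (A : 'M[R]_n) (C : 'M[R]_(p, n)) : bool :=
  \rank (\mxcol_(i < n) (C *m A ^+ i)) == n.
Definition minimal n m p (A : 'M[R]_n) (B : 'M[R]_(n, m)) (C : 'M[R]_(p, n)) : bool :=
  controllable A B && observable A C.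

Definition lti_resp n m p (A : 'M[R]_n) (B : 'M[R]_(n, m)) (C : 'M[R]_(p, n))
  (D : 'M[R]_(p, m)) (u : nat -> 'cV[R]_m) (k : nat) : 'cV[R]_p :=
  D *m u k + \sum_(0 <= l < k) C *m A ^+ (k - l - 1) *m B *m u l.

Definition bounded_seq d (v : nat -> 'cV[R]_d) : Prop :=
  exists M : R, forall (k : nat) (i : 'I_d), `|v k i 0| <= M.

Definition BIBO_stable n m p (A : 'M[R]_n) (B : 'M[R]_(n, m)) (C : 'M[R]_(p, n))
  (D : 'M[R]_(p, m)) : Prop :=
  forall u : nat -> 'cV[R]_m, bounded_seq u -> bounded_seq (lti_resp A B C D u).

Definition obsmx q n p (A : 'M[R]_n) (C : 'M[R]_(p, n)) :=
  \mxcol_(r < q.+1) (C *m A ^+ r).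

Definition toeplitz q n m p (A : 'M[R]_n) (B : 'M[R]_(n, m)) (C : 'M[R]_(p, n))
  (D : 'M[R]_(p, m)) :=
  \mxblock_(r < q.+1, s < q.+1)
     (if (s < r)%N then C *m A ^+ (r - s - 1) *m B
      else if r == s then D else 0).

Definition stack q d (v : nat -> 'cV[R]_d) (k : nat) :=
  \mxcol_(r < q.+1) v (k + r)%N.

Definition ldag a b (O : 'M[R]_(a, b)) : 'M[R]_(b, a) := invmx (O^T *m O) *m O^T.
Definition rdag a b (P : 'M[R]_(a, b)) : 'M[R]_(b, a) := P^T *m invmx (P *m P^T).

End LTI.

Section Constructions.
Variables (R : realType) (n m p sig : nat).
Variables (Ah : 'I_sig -> 'M[R]_n) (Bh : 'I_sig -> 'M[R]_(n, m))
          (Ch : 'I_sig -> 'M[R]_(p, n)) (Dh : 'I_sig -> 'M[R]_(p, m)).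
Variables (phi : nat -> 'I_sig) (u : nat -> 'cV[R]_m) (y : nat -> 'cV[R]_p).
Variables (ks : nat -> nat) (istar N : nat).

Definition dstar : nat := \big[minn/N]_(i < istar.+1) (ks i.+1 - ks i)%N.
Definition qq : nat := (dstar).-1.

Definition xhat (i : nat) : 'cV[R]_n :=
  let nu := phi (ks i.-1) in
  ldag (obsmx qq (Ah nu) (Ch nu)) *m
    (stack qq y (ks i.-1) - toeplitz qq (Ah nu) (Bh nu) (Ch nu) (Dh nu) *m stack qq u (ks i.-1)).

(* kappa_{i-1} *)
Definition kappa (i : nat) : 'cV[R]_n :=
  let nu := phi (ks i.-1) in
  Ah nu ^+ (ks i - ks i.-1) *m xhat i
  + \sum_(ks i.-1 <= l < ks i) Ah nu ^+ (ks i - l - 1) *m Bh nu *m u l.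

Definition zeta (i k : nat) : 'cV[R]_p :=
  let mu := phi (ks i) in
  y k - Dh mu *m u k - \sum_(ks i <= l < k) Ch mu *m Ah mu ^+ (k - l - 1) *m Bh mu *m u l.

Definition Zst (i : nat) := stack qq (zeta i) (ks i).

Definition Nset (nu mu : 'I_sig) : seq nat :=
  [seq i <- iota 1 istar | (phi (ks i.-1) == nu) && (phi (ks i) == mu)].

Definition Psi (nu mu : 'I_sig) : 'M[R]_(n, size (Nset nu mu)) :=
  \matrix_(a < n, c < size (Nset nu mu)) kappa (nth 0%N (Nset nu mu) c) a 0.

Definition Zmat (nu mu : 'I_sig) : 'M[R]_(\sum_(r < qq.+1) p, size (Nset nu mu)) :=
  \matrix_(a < \sum_(r < qq.+1) p, c < size (Nset nu mu))
     Zst (nth 0%N (Nset nu mu) c) a 0.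

End Constructions.

From HB Require Import structures.
From mathcomp Require Import all_boot all_order all_algebra.
From mathcomp Require Import reals.
From mathcomp Require Import zify.
Set Implicit Arguments. Unset Strict Implicit. Unset Printing Implicit Defensive.
Import Order.TTheory GRing.Theory Num.Theory.
Local Open Scope ring_scope.

(* Write xh_j(k) = T_j^-1 x(k) for the state in the coordinates of the local
   estimate of mode j.  On a dwell interval of mode j, xh_j obeys the estimated
   realization (Ah_j, Bh_j, Ch_j, Dh_j) exactly.  Since every dwell interval
   contains a window of q+1 = delta_* >= n samples, and the extended
   observability matrix O_j of an observable pair has full column rank n on
   such a window, we get for each switch i from nu to mu:
     - the state estimate xhat(k_{i-1}) equals xh_nu(k_{i-1});
     - kappa_{i-1}, its propagation, equals xh_nu(k_i);
     - the corrected stacked output Z_i equals O_mu xh_mu(k_i)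
       = O_mu (T_mu^-1 T_nu) kappa_{i-1}.
   Gathering the columns, Z = O_mu (T_mu^-1 T_nu) Psi; the left inverse of
   O_mu and the right inverse of the full-row-rank Psi then isolate the
   unknown. *)


(* The Gram matrix O^T O of a full-column-rank real matrix is invertible:
   a kernel row v gives |v O^T|^2 = v O^T O v^T = 0, hence v O^T = 0,
   and O^T has free rows. *)
Lemma gram_unit (R : realFieldType) a b (O : 'M[R]_(a, b)) :
  \rank O = b -> O^T *m O \in unitmx.
Proof.
move=> rO; rewrite -row_free_unit -kermx_eq0; apply/eqP/row_matrixP => i.
set v := row i (kermx (O^T *m O)).
have vK : v *m (O^T *m O) = 0 by rewrite /v -row_mul mulmx_ker row0.
have w_norm0 : (v *m O^T) *m (v *m O^T)^T = 0.
  by rewrite trmx_mul trmxK mulmxA -(mulmxA v) vK mul0mx.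
have w0 : v *m O^T = 0.
  move: w_norm0; move: (v *m O^T) => w w_norm0.
  apply/matrixP => r c; rewrite [RHS]mxE (ord1 r).
  have := congr1 (fun M : 'M[R]_1 => M 0 0) w_norm0; rewrite !mxE => /eqP.
  rewrite psumr_eq0; last by move=> k _; rewrite mxE -expr2 sqr_ge0.
  move=> /allP /(_ c (mem_index_enum _)) /implyP /(_ isT).
  by rewrite mxE -expr2 sqrf_eq0 => /eqP.
have freeOT : row_free O^T by rewrite /row_free mxrank_tr rO.
by rewrite row0; apply/eqP; rewrite -(mulmx_free_eq0 _ freeOT) w0.
Qed.

Lemma ldagK (R : realType) a b (O : 'M[R]_(a, b)) c (V : 'M[R]_(b, c)) :
  \rank O = b -> ldag O *m (O *m V) = V.
Proof.
move=> rO; rewrite /ldag -mulmxA [O^T *m (O *m V)]mulmxA mulmxA.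
by rewrite mulVmx ?mul1mx // gram_unit.
Qed.

Lemma rdagK (R : realType) a b (P : 'M[R]_(a, b)) c (V : 'M[R]_(c, a)) :
  \rank P = a -> V *m P *m rdag P = V.
Proof.
move=> rP; rewrite /rdag -mulmxA [P *m _]mulmxA mulmxV ?mulmx1 //.
by have := @gram_unit R _ _ P^T; rewrite trmxK; apply; rewrite mxrank_tr.
Qed.

Lemma conj_pow (R : comUnitRingType) n (T A : 'M[R]_n) r : T \in unitmx ->
  (invmx T *m A *m T) ^+ r = invmx T *m A ^+ r *m T.
Proof.
move=> uT; elim: r => [|r IH]; first by rewrite !expr0 mulmx1 mulVmx.
by rewrite !exprS IH -!mulmxE !mulmxA mulmxK.
Qed.

Lemma obsmx_conj (R : realType) q n p (A T : 'M[R]_n) (C : 'M[R]_(p, n)) :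
  T \in unitmx -> obsmx q (invmx T *m A *m T) (C *m T) = obsmx q A C *m T.
Proof.
move=> uT; rewrite /obsmx mxcol_mul; apply: eq_mxcol => r.
by rewrite conj_pow // !mulmxA mulmxK.
Qed.

(* An observable pair has a full-column-rank extended observability matrix
   as soon as it has at least n block rows (the first n rows are the Kalman
   observability matrix). *)
Lemma obsmx_rank (R : realType) q n p (A : 'M[R]_n) (C : 'M[R]_(p, n)) :
  observable A C -> (n <= q.+1)%N -> \rank (obsmx q A C) = n.
Proof.
move=> /eqP obsAC nq; apply/eqP; rewrite eqn_leq rank_leq_col /= -[X in (X <= _)%N]obsAC.
set S := \mxblock_(i < n, r < q.+1) (if i == r :> nat then 1%:M else 0 : 'M[R]_(p, p)).
have -> : \mxcol_(i < n) (C *m A ^+ i) = S *m obsmx q A C.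
  rewrite /S /obsmx mul_mxblock_mxrow; apply: eq_mxcol => i.
  have iq : (i < q.+1)%N by apply: leq_trans nq.
  rewrite (bigD1 (Ordinal iq)) //= eqxx mul1mx big1 ?addr0 // => r ri.
  case: ifP => [/eqP Eir|]; last by rewrite mul0mx.
  by move: ri; rewrite -val_eqE /= Eir eqxx.
exact: mxrankM_maxr.
Qed.

Section LTIWindow.
Variables (R : pzRingType) (n m p : nat).
Variables (A : 'M[R]_n) (B : 'M[R]_(n, m)) (C : 'M[R]_(p, n)) (D : 'M[R]_(p, m)).
Variables (x : nat -> 'cV[R]_n) (u : nat -> 'cV[R]_m) (y : nat -> 'cV[R]_p).

Lemma lti_state k0 k : (k0 <= k)%N ->
  (forall l, (k0 <= l < k)%N -> x l.+1 = A *m x l + B *m u l) ->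
  x k = A ^+ (k - k0) *m x k0 + \sum_(k0 <= l < k) A ^+ (k - l - 1) *m B *m u l.
Proof.
elim: k => [|k IH] k0k step.
  have -> : k0 = 0%N by lia.
  by rewrite big_geq // expr0 mul1mx addr0.
have [k0_eq|k0k'] := eqVneq k0 k.+1.
  by rewrite k0_eq subnn big_geq // expr0 mul1mx addr0.
rewrite step; last by lia.
rewrite IH; first last.
- by move=> l Hl; apply: step; lia.
- by lia.
have powS j : A *m A ^+ j = A ^+ j.+1 by rewrite exprS.
rewrite big_nat_recr /=; last by lia.
rewrite mulmxDr addrA mulmxA powS mulmx_sumr -!addrA.
have -> : (k.+1 - k0 = (k - k0).+1)%N by lia.
have -> : (k.+1 - k - 1 = 0)%N by lia.
rewrite expr0 mul1mx; congr (_ + (_ + _)); apply: eq_big_nat => l Hl.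
have -> : (k.+1 - l - 1 = (k - l - 1).+1)%N by lia.
by rewrite -powS !mulmxA.
Qed.

Lemma lti_free_output k0 r :
  (forall l, (k0 <= l < k0 + r)%N -> x l.+1 = A *m x l + B *m u l) ->
  y (k0 + r)%N = C *m x (k0 + r)%N + D *m u (k0 + r)%N ->
  y (k0 + r)%N - D *m u (k0 + r)%N
    - \sum_(k0 <= l < k0 + r) C *m A ^+ (k0 + r - l - 1) *m B *m u l
  = C *m A ^+ r *m x k0.
Proof.
move=> step out; rewrite out (lti_state (leq_addr r k0) step) addKn addrK.
rewrite mulmxDr mulmx_sumr mulmxA.
under eq_bigr do rewrite !mulmxA.
by rewrite addrK.
Qed.

End LTIWindow.

Section StackedWindow.
Variables (R : realType) (n m p q : nat).
Variables (A : 'M[R]_n) (B : 'M[R]_(n, m)) (C : 'M[R]_(p, n)) (D : 'M[R]_(p, m)).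
Variables (x : nat -> 'cV[R]_n) (u : nat -> 'cV[R]_m) (y : nat -> 'cV[R]_p).

Lemma toeplitz_stack_row k0 (r : 'I_q.+1) :
  \sum_(s < q.+1) ((if (s < r)%N then C *m A ^+ (r - s - 1) *m B
                    else if r == s then D else 0) *m u (k0 + s)%N)
  = \sum_(k0 <= l < k0 + r) C *m A ^+ (k0 + r - l - 1) *m B *m u l
    + D *m u (k0 + r)%N.
Proof.
rewrite (bigID (fun s : 'I_q.+1 => (s < r)%N)) /=; congr (_ + _).
  rewrite -{2}[k0]add0n big_addn addKn (big_nat_widen _ _ q.+1) ?big_mkord.
    apply: eq_big => // s sr; rewrite sr.
    have -> : (k0 + r - (s + k0) - 1 = r - s - 1)%N by lia.
    by rewrite addnC.
  exact: ltnW (ltn_ord r).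
rewrite (bigD1 r) /=; last by rewrite ltnn.
rewrite ltnn eqxx big1 ?addr0 // => s /andP [sr rs].
by rewrite (negbTE sr) eq_sym (negbTE rs) mul0mx.
Qed.

Lemma stack_free_output k0 :
  (forall l, (k0 <= l < k0 + q)%N -> x l.+1 = A *m x l + B *m u l) ->
  (forall r : 'I_q.+1, y (k0 + r)%N = C *m x (k0 + r)%N + D *m u (k0 + r)%N) ->
  stack q y k0 - toeplitz q A B C D *m stack q u k0 = obsmx q A C *m x k0.
Proof.
move=> step out; rewrite /stack /toeplitz /obsmx mul_mxblock_mxrow mxcol_mul -mxcolB.
apply: eq_mxcol => r; rewrite toeplitz_stack_row opprD addrA addrAC.
apply: lti_free_output (out r) => l lr; apply: step.
by have := ltn_ord r; lia.
Qed.

End StackedWindow.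

Lemma bigminn_le (I : eqType) (s : seq I) (F : I -> nat) (N : nat) j :
  j \in s -> (\big[minn/N]_(i <- s) F i <= F j)%N.
Proof.
elim: s => [//|a s IH]; rewrite in_cons big_cons => /orP [/eqP->|/IH le_sj].
  exact: geq_minl.
exact: leq_trans (geq_minr _ _) le_sj.
Qed.

Section Schedule.
Variables (sig : nat) (phi : nat -> 'I_sig) (ks : nat -> nat) (istar N : nat).
Hypothesis ks_inc : forall i, (i <= istar)%N -> (ks i < ks i.+1)%N.

Lemma ks_mono a b : (a <= b <= istar.+1)%N -> (ks a <= ks b)%N.
Proof.
elim: b => [|b IH] ab; first by have -> : a = 0%N by lia.
have [ab'|ba] := ltnP a b.+1; last by have -> : a = b.+1 by lia.
have := ks_inc (ltac:(lia) : (b <= istar)%N); have := IH ltac:(lia); lia.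
Qed.

Lemma dwell_window i : (i <= istar)%N -> (ks i + qq ks istar N < ks i.+1)%N.
Proof.
move=> iI; have := ks_inc iI.
have := @bigminn_le _ (index_enum 'I_istar.+1) (fun j : 'I_istar.+1 => ks j.+1 - ks j)%N N
  (Ordinal (iI : (i < istar.+1)%N)) (mem_index_enum _).
rewrite -/(dstar ks istar N) /qq /=; lia.
Qed.

Hypotheses (ks0 : ks 0%N = 1%N) (ksN : ks istar.+1 = N).
Hypothesis phi_const :
  forall i k, (i <= istar)%N -> (ks i <= k < ks i.+1)%N -> phi k = phi (ks i).

Lemma mode_on i l : (i <= istar)%N -> (ks i <= l < ks i.+1)%N ->
  (1 <= l < N)%N /\ phi l = phi (ks i).
Proof.
move=> iI il; split; last exact: phi_const.
have := @ks_mono 0 i ltac:(lia); have := @ks_mono i.+1 istar.+1 ltac:(lia).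
by rewrite ks0 ksN; lia.
Qed.

End Schedule.

Section Recovery.
Variables (R : realType) (n m p sig : nat).
Variables (A : 'I_sig -> 'M[R]_n) (B : 'I_sig -> 'M[R]_(n, m))
          (C : 'I_sig -> 'M[R]_(p, n)) (D : 'I_sig -> 'M[R]_(p, m)).
Variables (x : nat -> 'cV[R]_n) (u : nat -> 'cV[R]_m) (y : nat -> 'cV[R]_p).
Variables (phi : nat -> 'I_sig) (N istar : nat) (ks : nat -> nat).
Variables (Ah : 'I_sig -> 'M[R]_n) (Bh : 'I_sig -> 'M[R]_(n, m))
          (Ch : 'I_sig -> 'M[R]_(p, n)) (Dh : 'I_sig -> 'M[R]_(p, m)).
Variable T : 'I_sig -> 'M[R]_n.

Hypothesis hx : forall k, (1 <= k < N)%N -> x k.+1 = A (phi k) *m x k + B (phi k) *m u k.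
Hypothesis hy : forall k, (1 <= k <= N)%N -> y k = C (phi k) *m x k + D (phi k) *m u k.
Hypotheses (ks0 : ks 0%N = 1%N) (ksN : ks istar.+1 = N).
Hypothesis ks_inc : forall i, (i <= istar)%N -> (ks i < ks i.+1)%N.
Hypothesis phi_const :
  forall i k, (i <= istar)%N -> (ks i <= k < ks i.+1)%N -> phi k = phi (ks i).
Hypothesis obs : forall j, observable (A j) (C j).
Hypothesis dwell_n : (n <= dstar ks istar N)%N.
Hypothesis T_unit : forall j, T j \in unitmx.
Hypothesis hA : forall j, Ah j = invmx (T j) *m A j *m T j.
Hypothesis hB : forall j, Bh j = invmx (T j) *m B j.
Hypothesis hC : forall j, Ch j = C j *m T j.
Hypothesis hD : forall j, Dh j = D j.

Local Notation q := (qq ks istar N).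

Definition hat_state (j : 'I_sig) (k : nat) : 'cV[R]_n := invmx (T j) *m x k.

Lemma hat_state_change j j' k :
  hat_state j' k = invmx (T j') *m T j *m hat_state j k.
Proof. by rewrite /hat_state -mulmxA mulKVmx. Qed.

Lemma hat_step i l : (i <= istar)%N -> (ks i <= l < ks i.+1)%N ->
  hat_state (phi (ks i)) l.+1
  = Ah (phi (ks i)) *m hat_state (phi (ks i)) l + Bh (phi (ks i)) *m u l.
Proof.
move=> iI il; have [lN <-] := mode_on ks_inc ks0 ksN phi_const iI il.
by rewrite /hat_state hx // hA hB mulmxDr !mulmxA mulmxK.
Qed.

Lemma hat_output i l : (i <= istar)%N -> (ks i <= l < ks i.+1)%N ->
  y l = Ch (phi (ks i)) *m hat_state (phi (ks i)) l + Dh (phi (ks i)) *m u l.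
Proof.
move=> iI il; have [lN <-] := mode_on ks_inc ks0 ksN phi_const iI il.
rewrite /hat_state hy; last by lia.
by rewrite hC hD -mulmxA mulKVmx.
Qed.

(* Observability and delta_* >= n make every estimated extended
   observability matrix left-invertible. *)
Lemma hat_obsmx_rank j : \rank (obsmx q (Ah j) (Ch j)) = n.
Proof.
rewrite hA hC obsmx_conj // mxrankMfree ?row_free_unit //.
exact/obsmx_rank/(leq_trans dwell_n (leqSpred _)).
Qed.

Lemma xhat_eq i : (1 <= i <= istar)%N ->
  xhat Ah Bh Ch Dh phi u y ks istar N i = hat_state (phi (ks i.-1)) (ks i.-1).
Proof.
move=> iI; have i'I : (i.-1 <= istar)%N by lia.
have := dwell_window N ks_inc i'I=> win.
rewrite /xhat (@stack_free_output _ _ _ _ _ _ _ _ _ (hat_state (phi (ks i.-1)))).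
- by rewrite ldagK ?hat_obsmx_rank.
- by move=> l il; apply: hat_step; lia.
- by move=> r; apply: hat_output; have := ltn_ord r; lia.
Qed.

Lemma kappa_eq i : (1 <= i <= istar)%N ->
  kappa Ah Bh Ch Dh phi u y ks istar N i = hat_state (phi (ks i.-1)) (ks i).
Proof.
move=> iI; have i'I : (i.-1 <= istar)%N by lia.
have ei : i.-1.+1 = i by lia.
rewrite /kappa /= xhat_eq //; apply/esym/lti_state.
- by have := ks_inc i'I; rewrite ei; lia.
- by move=> l il; apply: hat_step; rewrite ?ei.
Qed.

Lemma Zst_eq i : (i <= istar)%N ->
  Zst Ah Bh Ch Dh phi u y ks istar N i
  = obsmx q (Ah (phi (ks i))) (Ch (phi (ks i))) *m hat_state (phi (ks i)) (ks i).
Proof.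
move=> iI; have := dwell_window N ks_inc iI=> win.
rewrite /Zst /stack /obsmx mxcol_mul; apply: eq_mxcol => r; rewrite /zeta /=.
have rq := ltn_ord r.
apply: lti_free_output => [l il|]; first by apply: hat_step; lia.
by apply: hat_output; lia.
Qed.

Lemma Zmat_factor nu mu :
  Zmat Ah Bh Ch Dh phi u y ks istar N nu mu
  = obsmx q (Ah mu) (Ch mu) *m (invmx (T mu) *m T nu)
      *m Psi Ah Bh Ch Dh phi u y ks istar N nu mu.
Proof.
apply/matrixP => a c; rewrite [LHS]mxE [RHS]mxE.
set i := nth 0%N (Nset phi ks istar nu mu) c.
have : i \in Nset phi ks istar nu mu by apply: mem_nth.
rewrite /Nset mem_filter mem_iota => /andP [/andP [/eqP nu_i /eqP mu_i] iI].
rewrite Zst_eq; last by lia.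
rewrite mu_i (hat_state_change (phi (ks i.-1))) -kappa_eq ?nu_i; last by lia.
rewrite mulmxA mxE; apply: eq_bigr => k _; congr (_ * _).
by rewrite /Psi [RHS]mxE.
Qed.

End Recovery.

Theorem theorem1 (R : realType) (n m p sig : nat)
  (A : 'I_sig -> 'M[R]_n) (B : 'I_sig -> 'M[R]_(n, m))
  (C : 'I_sig -> 'M[R]_(p, n)) (D : 'I_sig -> 'M[R]_(p, m))
  (x : nat -> 'cV[R]_n) (u : nat -> 'cV[R]_m) (y : nat -> 'cV[R]_p)
  (phi : nat -> 'I_sig) (N istar : nat) (ks : nat -> nat)
  (Ah : 'I_sig -> 'M[R]_n) (Bh : 'I_sig -> 'M[R]_(n, m))
  (Ch : 'I_sig -> 'M[R]_(p, n)) (Dh : 'I_sig -> 'M[R]_(p, m))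
  (T : 'I_sig -> 'M[R]_n)
  (nu mu : 'I_sig) :
  (2 <= n)%N ->
  (* the LSS *)
  (forall k, (1 <= k < N)%N -> x k.+1 = A (phi k) *m x k + B (phi k) *m u k) ->
  (forall k, (1 <= k <= N)%N -> y k = C (phi k) *m x k + D (phi k) *m u k) ->
  (* phi : [1,N] -> S is surjective *)
  (forall j : 'I_sig, exists k, (1 <= k <= N)%N /\ phi k = j) ->
  (* switching times *)
  ks 0%N = 1%N -> ks istar.+1 = N ->
  (forall i, (i <= istar)%N -> (ks i < ks i.+1)%N) ->
  (forall i k, (i <= istar)%N -> (ks i <= k < ks i.+1)%N -> phi k = phi (ks i)) ->
  (forall i, (1 <= i <= istar)%N -> phi (ks i) != phi (ks i).-1) ->
  (* standing assumptions on the modes *)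
  (forall j, minimal (A j) (B j) (C j)) ->
  (forall j, A j \in unitmx) ->
  (forall j, BIBO_stable (A j) (B j) (C j) (D j)) ->
  (n <= dstar ks istar N)%N ->
  (* local estimates *)
  (forall j, T j \in unitmx) ->
  (forall j, Ah j = invmx (T j) *m A j *m T j) ->
  (forall j, Bh j = invmx (T j) *m B j) ->
  (forall j, Ch j = C j *m T j) ->
  (forall j, Dh j = D j) ->
  (* the pair (nu, mu) *)
  nu != mu ->
  Nset phi ks istar nu mu != [::] ->
  \rank (Psi Ah Bh Ch Dh phi u y ks istar N nu mu) = n ->
  invmx (T mu) *m T nu =
    ldag (obsmx (qq ks istar N) (Ah mu) (Ch mu))
      *m Zmat Ah Bh Ch Dh phi u y ks istar N nu mu
      *m rdag (Psi Ah Bh Ch Dh phi u y ks istar N nu mu).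
Proof.
move=> _ hx hy _ ks0 ksN ks_inc phi_const _ min_modes _ _ dwell_n T_unit
  hA hB hC hD _ _ rank_Psi.
have obs j : observable (A j) (C j) by case/andP: (min_modes j).
rewrite (Zmat_factor hx hy ks0 ksN ks_inc phi_const obs dwell_n T_unit hA hB hC hD).
rewrite -[obsmx _ _ _ *m _ *m _]mulmxA ldagK ?(hat_obsmx_rank obs dwell_n T_unit hA hC) //.
by rewrite rdagK.
Qed.
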